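(* Let $p\ge 2$ be an integer and $\omega\ge1$ real, and let $k=\lfloor\log_p((p-1)\omega+1)\rfloor-1$. Then the minimal real resolution of $\omega$ is $$\widetilde\gamma_i(\omega)=p^{-i}\,\frac{p-1}{p-p^{-k}}\,\omega\quad(0\le i\le k),\qquad \widetilde\gamma_i(\omega)=0\quad(i>k).$$
   Context: A real resolution of $\omega$ is a sequence $(\gamma_i)_{i\ge0}$ with values in $\{0\}\cup[1,\infty)$ such that $\gamma_i\ge p\gamma_{i+1}$ for all $i$ and $\sum_{i\ge0}\gamma_i=\omega$. The minimal real resolution $(\widetilde\gamma_i(\omega))_{i\ge0}$ is the lexicographically smallest real resolution of $\omega$ (compared at the first index where two sequences differ). *)

From Stdlib Require Import Reals Lra Lia.
Open Scope R_scope.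

Definition real_resolution (p : nat) (omega : R) (g : nat -> R) : Prop :=
  (forall i, g i = 0 \/ 1 <= g i) /\
  (forall i, INR p * g (S i) <= g i) /\
  infinite_sum g omega.

Definition lex_lt (g h : nat -> R) : Prop :=
  exists n, (forall i, (i < n)%nat -> g i = h i) /\ g n < h n.

Definition minimal_real_resolution (p : nat) (omega : R) (g : nat -> R) : Prop :=
  real_resolution p omega g /\
  forall h, real_resolution p omega h -> g = h \/ lex_lt g h.

(* floor of log_p x, via Stdlib's Int_part (= floor). *)
Definition floor_log (p : nat) (x : R) : Z := Int_part (ln x / ln (INR p)).

(* A real resolution h descends by the factor p, so if h j >= 1 its partial sum up to j is at
   least (p^(j+1) - 1)/(p - 1); by the choice of k every resolution of omega therefore vanishes
   beyond k.  Among sequences supported on [0, k] with sum omega, the geometric one with ratio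
   1/p is lexicographically least: if h first drops below it at an index n, the descent
   condition keeps h strictly below it on all of [n, k], so h sums to less than omega.  The
   lower bound p^(k+1) <= (p-1) omega + 1 is exactly what makes its last term at least 1. *)

From Stdlib Require Import Reals Lra Lia Classical FunctionalExtensionality Wf_nat.
Open Scope R_scope.

Lemma sum_f_R0_eventually_const (f : nat -> R) (K : nat) :
  (forall i, (K < i)%nat -> f i = 0) ->
  forall n, (K <= n)%nat -> sum_f_R0 f n = sum_f_R0 f K.
Proof.
  intros Hf n Hn; induction Hn as [|n Hn IH]; [reflexivity|].
  simpl; rewrite IH, Hf by lia; ring.
Qed.

Lemma infinite_sum_finite_support (f : nat -> R) (K : nat) :
  (forall i, (K < i)%nat -> f i = 0) -> infinite_sum f (sum_f_R0 f K).
Proof.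
  intros Hf e He; exists K; intros n Hn.
  rewrite (sum_f_R0_eventually_const f K Hf n) by lia.
  unfold R_dist; rewrite Rminus_diag, Rabs_R0; lra.
Qed.

Lemma sum_f_R0_lt (f g : nat -> R) (N n : nat) :
  (forall i, (i <= N)%nat -> f i <= g i) -> (n <= N)%nat -> f n < g n ->
  sum_f_R0 f N < sum_f_R0 g N.
Proof.
  intros Hle Hn Hlt; induction N as [|N IH]; simpl.
  - replace n with 0%nat in Hlt by lia; exact Hlt.
  - destruct (Nat.eq_dec n (S N)) as [->|Hne].
    + assert (sum_f_R0 f N <= sum_f_R0 g N) by (apply sum_Rle; intros; apply Hle; lia).
      lra.
    + assert (sum_f_R0 f N < sum_f_R0 g N) by (apply IH; intros; try apply Hle; lia).
      assert (f (S N) <= g (S N)) by (apply Hle; lia).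
      lra.
Qed.

Lemma eq_or_first_difference (g h : nat -> R) :
  g = h \/ exists n, (forall i, (i < n)%nat -> g i = h i) /\ g n <> h n.
Proof.
  destruct (classic (exists n, g n <> h n)) as [Hex|Hall].
  - right.
    destruct (dec_inh_nat_subset_has_unique_least_element (fun n => g n <> h n)
                (fun n => classic _) Hex) as [n [[Hn Hmin] _]].
    exists n; split; [|exact Hn].
    intros i Hi; apply NNPP; intro Hne; specialize (Hmin i Hne); lia.
  - left; apply functional_extensionality; intro i.
    apply NNPP; intro Hne; apply Hall; eauto.
Qed.

Lemma pow_le_iff_le_log_div (P x : R) (n : nat) :
  1 < P -> 0 < x -> P ^ n <= x <-> INR n <= ln x / ln P.
Proof.
  intros HP Hx.
  assert (HlnP : 0 < ln P) by (rewrite <- ln_1; apply ln_increasing; lra).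
  assert (Hpow : 0 < P ^ n) by (apply pow_lt; lra).
  assert (Hln : ln x = ln x / ln P * ln P) by (field; lra).
  set (r := ln x / ln P) in *.
  transitivity (ln (P ^ n) <= ln x).
  - split; intro H.
    + destruct H as [H|H]; [left; now apply ln_increasing | right; now rewrite H].
    + destruct (Rle_lt_dec (P ^ n) x) as [|Hlt]; [assumption|].
      apply ln_increasing in Hlt; lra.
  - rewrite ln_pow, Hln by lra.
    split; intro H; [apply Rmult_le_reg_r in H | apply Rmult_le_compat_r]; lra.
Qed.

Lemma floor_log_pow_bounds (p : nat) (x : R) (n : nat) :
  (2 <= p)%nat -> 0 < x -> floor_log p x = Z.of_nat n ->
  INR p ^ n <= x < INR p ^ S n.
Proof.
  intros Hp Hx Hn.
  assert (HP : 1 < INR p) by (apply (lt_INR 1); lia).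
  unfold floor_log in Hn.
  destruct (base_Int_part (ln x / ln (INR p))) as [Hlo Hhi].
  rewrite Hn, <- INR_IZR_INZ in Hlo, Hhi.
  split.
  - now apply pow_le_iff_le_log_div.
  - destruct (Rlt_le_dec x (INR p ^ S n)) as [|Hle]; [assumption|].
    apply pow_le_iff_le_log_div in Hle; [|lra|lra].
    rewrite S_INR in Hle; lra.
Qed.

Lemma floor_log_ge_1 (p : nat) (x : R) :
  (2 <= p)%nat -> INR p <= x -> (1 <= floor_log p x)%Z.
Proof.
  intros Hp Hx.
  assert (HP : 1 < INR p) by (apply (lt_INR 1); lia).
  assert (H1 : INR 1 <= ln x / ln (INR p))
    by (apply pow_le_iff_le_log_div; simpl; lra).
  unfold floor_log.
  destruct (base_Int_part (ln x / ln (INR p))) as [Hlo Hhi].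
  assert (0 < Int_part (ln x / ln (INR p)))%Z by (apply lt_IZR; simpl in H1; lra).
  lia.
Qed.

Section Descending.

Variable P : R.
Variable h : nat -> R.
Hypothesis descending : forall i, P * h (S i) <= h i.

Lemma descending_pow_le (d i : nat) : 0 <= P -> P ^ d * h (i + d)%nat <= h i.
Proof.
  intros HP; induction d as [|d IH].
  - rewrite Nat.add_0_r; simpl; lra.
  - rewrite Nat.add_succ_r; simpl.
    assert (0 <= P ^ d) by (apply pow_le; lra).
    pose proof (Rmult_le_compat_l _ _ _ H (descending (i + d))).
    lra.
Qed.

Lemma descending_sum_ge (n : nat) (x : R) :
  1 < P -> x <= h n -> x * (P ^ S n - 1) <= (P - 1) * sum_f_R0 h n.
Proof.
  intros HP; revert x; induction n as [|n IH]; intros x Hx; simpl.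
  - nra.
  - assert (HPx : P * x <= h n) by (pose proof (descending n); nra).
    specialize (IH _ HPx); simpl in IH.
    assert (x * (P - 1) <= h (S n) * (P - 1)) by nra.
    replace (x * (P * (P * P ^ n) - 1)) with (P * x * (P * P ^ n - 1) + x * (P - 1))
      by ring.
    lra.
Qed.

Lemma descending_sum_lt (g : nat -> R) (K n : nat) :
  0 < P -> (n <= K)%nat ->
  (forall i, (n <= i <= K)%nat -> g n = P ^ (i - n) * g i) ->
  (forall i, (i < n)%nat -> g i = h i) -> h n < g n ->
  sum_f_R0 h K < sum_f_R0 g K.
Proof.
  intros HP HnK Hratio Hagree Hlt.
  apply (sum_f_R0_lt _ _ K n); [|exact HnK|exact Hlt].
  intros i Hi; destruct (Nat.lt_ge_cases i n) as [Hin|Hni].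
  - rewrite Hagree by exact Hin; lra.
  - pose proof (descending_pow_le (i - n) n ltac:(lra)) as Hchain.
    replace (n + (i - n))%nat with i in Hchain by lia.
    rewrite (Hratio i) in Hlt by lia.
    assert (0 < P ^ (i - n)) by (apply pow_lt; lra).
    apply Rlt_le, (Rmult_lt_reg_l (P ^ (i - n))); lra.
Qed.

Hypothesis zero_or_ge_1 : forall i, h i = 0 \/ 1 <= h i.

Lemma resolution_vanishes (omega : R) (K : nat) :
  1 < P -> infinite_sum h omega -> (P - 1) * omega + 1 < P ^ S (S K) ->
  forall j, (K < j)%nat -> h j = 0.
Proof.
  intros HP Hs Hbound j Hj.
  destruct (zero_or_ge_1 j) as [|H1]; [assumption|exfalso].
  assert (Hgrowing : Un_growing (sum_f_R0 h)).
  { intro n; simpl; destruct (zero_or_ge_1 (S n)); lra. }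
  pose proof (growing_ineq _ _ Hgrowing Hs j) as Hle.
  pose proof (descending_sum_ge j 1 HP H1) as Hge.
  assert (P ^ S (S K) <= P ^ S j) by (apply Rle_pow; lra || lia).
  nra.
Qed.

End Descending.

Definition geometric_resolution (P omega : R) (K i : nat) : R :=
  if (i <=? K)%nat then / P ^ i * ((P - 1) / (P - / P ^ K)) * omega else 0.

Section Geometric.

Variables (P omega : R) (K : nat).
Hypothesis HP : 1 < P.

Let g := geometric_resolution P omega K.

Lemma geometric_resolution_vanishes i : (K < i)%nat -> g i = 0.
Proof. intros Hi; unfold g, geometric_resolution; destruct (Nat.leb_spec i K); lia || lra. Qed.

Lemma geometric_resolution_ratio n i :
  (n <= i <= K)%nat -> g n = P ^ (i - n) * g i.
Proof.
  intros Hi; unfold g, geometric_resolution.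
  destruct (Nat.leb_spec n K), (Nat.leb_spec i K); try lia.
  replace i with ((i - n) + n)%nat at 2 by lia.
  rewrite pow_add.
  set (C := (P - 1) / (P - / P ^ K)).
  assert (0 < P ^ (i - n)) by (apply pow_lt; lra).
  assert (0 < P ^ n) by (apply pow_lt; lra).
  field; split; lra.
Qed.

Lemma geometric_resolution_sum : sum_f_R0 g K = omega.
Proof.
  set (C := (P - 1) / (P - / P ^ K) * omega).
  rewrite (sum_eq g (fun i => (/ P) ^ i * C)).
  2:{ intros i Hi; unfold g, geometric_resolution, C.
      destruct (Nat.leb_spec i K); try lia.
      rewrite pow_inv; ring. }
  assert (/ P <> 1) by (intro E; assert (P * / P = 1) by (field; lra); nra).
  rewrite <- scal_sum, tech3 by assumption.
  unfold C; rewrite pow_inv; simpl.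
  assert (1 <= P ^ K) by (apply pow_R1_Rle; lra).
  field; repeat split; nra.
Qed.

Hypothesis last_term_large : P ^ S K <= (P - 1) * omega + 1.

Lemma geometric_resolution_ge_1 i : (i <= K)%nat -> 1 <= g i.
Proof.
  intros Hi.
  assert (HPK : 1 <= P ^ K) by (apply pow_R1_Rle; lra).
  assert (HgK : 1 <= g K).
  { unfold g, geometric_resolution; rewrite Nat.leb_refl.
    replace (/ P ^ K * ((P - 1) / (P - / P ^ K)) * omega)
      with ((P - 1) * omega / (P ^ S K - 1)) by (simpl; field; split; nra).
    simpl in last_term_large.
    apply (Rmult_le_reg_r (P * P ^ K - 1)); [nra|].
    unfold Rdiv; rewrite Rmult_assoc, Rinv_l, Rmult_1_r by nra; lra. }
  rewrite (geometric_resolution_ratio i K) by lia.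
  assert (1 <= P ^ (K - i)) by (apply pow_R1_Rle; lra).
  nra.
Qed.

Lemma geometric_resolution_descending i : P * g (S i) <= g i.
Proof.
  destruct (Nat.le_gt_cases (S i) K) as [HiK|HiK].
  - rewrite (geometric_resolution_ratio i (S i)) by lia.
    replace (S i - i)%nat with 1%nat by lia; simpl; lra.
  - rewrite (geometric_resolution_vanishes (S i)) by lia.
    destruct (Nat.le_gt_cases i K).
    + assert (1 <= g i) by (apply geometric_resolution_ge_1; lia); lra.
    + rewrite geometric_resolution_vanishes by lia; lra.
Qed.

End Geometric.

Lemma geometric_resolution_real_resolution (p : nat) (omega : R) (K : nat) :
  (2 <= p)%nat -> INR p ^ S K <= (INR p - 1) * omega + 1 ->
  real_resolution p omega (geometric_resolution (INR p) omega K).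
Proof.
  intros Hp Hlast.
  assert (HP : 1 < INR p) by (apply (lt_INR 1); lia).
  split; [|split].
  - intro i; destruct (Nat.le_gt_cases i K).
    + right; now apply geometric_resolution_ge_1.
    + left; now apply geometric_resolution_vanishes.
  - intro i; now apply geometric_resolution_descending.
  - rewrite <- (geometric_resolution_sum (INR p) omega K) at 2 by exact HP.
    apply infinite_sum_finite_support, geometric_resolution_vanishes.
Qed.

Lemma geometric_resolution_minimal (p : nat) (omega : R) (K : nat) :
  (2 <= p)%nat ->
  INR p ^ S K <= (INR p - 1) * omega + 1 < INR p ^ S (S K) ->
  minimal_real_resolution p omega (geometric_resolution (INR p) omega K).
Proof.
  intros Hp [Hlast Hnext].
  assert (HP : 1 < INR p) by (apply (lt_INR 1); lia).
  set (g := geometric_resolution (INR p) omega K).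
  split; [now apply geometric_resolution_real_resolution|].
  intros h [Hv [Hd Hs]].
  assert (Hsum : sum_f_R0 h K = omega).
  { apply (UL_sequence (sum_f_R0 h)); [|exact Hs].
    apply infinite_sum_finite_support.
    exact (resolution_vanishes (INR p) h Hd Hv omega K HP Hs Hnext). }
  destruct (eq_or_first_difference g h) as [|[n [Hagree Hn]]]; [now left|right].
  exists n; split; [exact Hagree|].
  destruct (Nat.le_gt_cases n K) as [HnK|HnK].
  - apply Rnot_le_lt; intro Hle.
    assert (Hlt : h n < g n) by lra.
    pose proof (descending_sum_lt (INR p) h Hd g K n ltac:(lra) HnK
                  (fun i Hi => geometric_resolution_ratio _ _ _ HP n i Hi) Hagree Hlt)
      as Hsum_lt.
    unfold g in Hsum_lt; rewrite Hsum, geometric_resolution_sum in Hsum_lt by exact HP.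
    lra.
  - unfold g in *; rewrite geometric_resolution_vanishes in * by lia.
    destruct (Hv n); lra.
Qed.

Theorem mainTheorem7 (p : nat) (omega : R) (k : Z) :
  (2 <= p)%nat -> 1 <= omega ->
  k = (floor_log p ((INR p - 1) * omega + 1) - 1)%Z ->
  minimal_real_resolution p omega
    (fun i : nat =>
       if (Z.of_nat i <=? k)%Z
       then / (INR p ^ i) * ((INR p - 1) / (INR p - / (INR p ^ Z.to_nat k))) * omega
       else 0).
Proof.
  intros Hp Homega Hk.
  assert (HP : 2 <= INR p) by (apply (le_INR 2); lia).
  pose proof (floor_log_ge_1 p ((INR p - 1) * omega + 1) Hp ltac:(nra)).
  set (K := Z.to_nat k).
  assert (HkK : k = Z.of_nat K) by (unfold K; lia).
  replace (fun i : nat => _) with (geometric_resolution (INR p) omega K).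
  2:{ apply functional_extensionality; intro i; unfold geometric_resolution.
      rewrite HkK; destruct (Nat.leb_spec i K), (Z.leb_spec (Z.of_nat i) (Z.of_nat K));
        lia || reflexivity. }
  apply geometric_resolution_minimal; [exact Hp|].
  apply floor_log_pow_bounds; [exact Hp|nra|lia].
Qed.
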